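(* Let $k\geq1$ and let $w,\bar w\in\widetilde W_n$ both be increasing up to $k$ and have the same $k$-truncated A-code, with $\ell(w)=\ell(\bar w)+1$. Suppose that $v(\bar w)=s_iv(w)$ for some simple reflection $s_i$, $i\in\{\Box,1,2,\ldots\}$. Then $\bar w=s_iw$.
   Context: For $n\geq2$, $\widetilde W_n$ is the group of signed permutations $w=(w_1,\ldots,w_n)$ of $\{1,\ldots,n\}$ with an even number of negative entries; $\ell(w)=\#\{i<j\mid w_i>w_j\}+\sum_{w_i<0}(|w_i|-1)$. Left multiplication: for $i\geq1$, $s_iw$ interchanges the values $i,i+1$ (and $-i,-(i+1)$) in $w$; $s_\Box w$ replaces the values $1,2,-1,-2$ by $-2,-1,2,1$ respectively. $w$ is increasing up to $k$ if $|w_1|<w_2<\cdots<w_k$ (vacuous for $k=1$). The A-code is $\gamma_i:=\#\{j>i\mid w_j<w_i\}$ (for $w_1<-1$ the paper uses the A-code of the element obtained by changing the signs of $w_1$ and of the entry $\pm1$; this does not affect entries $\gamma_i$ with $i>k$), and the $k$-truncated A-code is $(\gamma_{k+1},\ldots,\gamma_n)$. $v(w)$ is obtained from $w$ by rearranging $w_{k+1},\ldots,w_n$ in increasing order. *)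

(* Signed permutations of type D, written as sequences of ints
   (one-line notation w = (w_1,...,w_n), stored 0-based). *)
From mathcomp Require Import all_boot all_order all_algebra.
Set Implicit Arguments. Unset Strict Implicit. Unset Printing Implicit Defensive.
Import Order.TTheory GRing.Theory Num.Theory.
Local Open Scope ring_scope.

Definition inWD (n : nat) (w : seq int) : bool :=
  [&& size w == n,
      perm_eq (map absz w) (iota 1 n)
    & ~~ odd (count (fun x : int => x < 0) w)].

Definition lenD (w : seq int) : nat :=
  (\sum_(i < size w) \sum_(j < size w | (i < j)%N)
      nat_of_bool (nth 0%R w j < nth 0%R w i)%R)%N
  + (\sum_(x <- w | (x < 0)%R) (absz x).-1)%N.

Inductive sref := Box | Sr of nat.

Definition valid_sref (n : nat) (s : sref) : bool :=
  match s with Box => true | Sr i => (0 < i < n)%N end.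

(* action of a simple reflection on values (left multiplication) *)
Definition sval (s : sref) (x : int) : int :=
  match s with
  | Box =>
      if x == 1 then -2 else if x == 2 then -1
      else if x == -1 then 2 else if x == -2 then 1 else x
  | Sr i =>
      if x == i%:Z then i.+1%:Z else if x == i.+1%:Z then i%:Z
      else if x == - i%:Z then - i.+1%:Z
      else if x == - i.+1%:Z then - i%:Z else x
  end.

Definition sact (s : sref) (w : seq int) : seq int := map (sval s) w.

(* w is increasing up to k: |w_1| < w_2 < ... < w_k (vacuous for k = 1);
   0-based: |w[0]| < w[1] < ... < w[k-1]. *)
Definition incr_upto (k : nat) (w : seq int) : Prop :=
  forall j : nat, (j.+1 < minn k (size w))%N ->
    (if j == 0%N then `|nth 0 w 0| else nth 0 w j) < nth 0 w j.+1.

Definition acode_entry (w : seq int) (i : nat) : nat :=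
  count (fun y => y < nth 0 w i) (drop i.+1 w).

Definition tcode (k : nat) (w : seq int) : seq nat :=
  [seq acode_entry w i | i <- iota k (size w - k)].

Definition vperm (k : nat) (w : seq int) : seq int :=
  take k w ++ sort (fun x y : int => x <= y) (drop k w).

From mathcomp Require Import all_boot all_order all_algebra.
Import Order.TTheory.

(* Write u and u' for the tails (w_{k+1}, ..., w_n) of w and of wb.  Comparing
   v(wb) = s v(w) position by position, the first k entries of wb are those of
   s w, and sort u' = s (sort u).  As sort u' is strictly increasing, s is
   strictly increasing on the entries of u, so s u has the same A-code as u,
   which is the truncated A-code of w, hence that of wb, i.e. the A-code of u'.
   But s u and u' have the same entries, and a sequence is determined by its
   entries and its A-code: u' = s u. *)

Local Open Scope order_scope.

Section ACode.
Context {d : Order.disp_t} {T : orderType d}.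
Implicit Types (s t : seq T).

Fixpoint acode s : seq nat :=
  if s is x :: s' then count (< x) s' :: acode s' else [::].

Lemma acode_perm_inj s t : perm_eq s t -> acode s = acode t -> s = t.
Proof.
have head_le x y s' t' : perm_eq (x :: s') (y :: t') ->
    count (< x) s' = count (< y) t' -> x <= y.
  (* if y < x, counting the entries below x on both sides gains y itself *)
  move=> /permP/(_ (< x)) /= count_x eq_count.
  rewrite leNgt; apply/negP=> lt_yx.
  have le_count : (count (< y) t' <= count (< x) t')%N.
    by apply: sub_count => z /= /lt_trans; apply.
  move: count_x; rewrite ltxx lt_yx add0n add1n eq_count => /eqP.
  by rewrite eqn_leq ltnNge le_count andbF.
elim: s t => [|x s IHs] [|y t] //=; try by move/perm_size.
move=> pst [eq_xy eq_acode].
have xy : x = y.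
  by apply: le_anti; rewrite (head_le x y s t) // (head_le y x t s) // perm_sym.
by rewrite -xy in pst *; rewrite (IHs t) // -(perm_cons x).
Qed.

End ACode.

Section MonotoneMaps.
Context {d d' : Order.disp_t} {T : orderType d} {T' : orderType d'}.
Implicit Types (s t : seq T).

Lemma acode_map_mono (f : T -> T') s :
  {in s &, {mono f : x y / x < y}} -> acode (map f s) = acode s.
Proof.
elim: s => [|x s IHs] //= f_mono; congr (_ :: _).
  rewrite count_map; apply: eq_in_count => y s_y /=.
  by rewrite f_mono ?inE ?s_y ?eqxx ?orbT.
by apply: IHs => y z s_y s_z; rewrite f_mono ?inE ?s_y ?s_z ?orbT.
Qed.

Lemma lt_sorted_map_homo_in (f : T -> T') s :
  sorted <%O s -> sorted <%O (map f s) -> {in s &, {homo f : x y / x < y}}.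
Proof.
move=> s_lt fs_lt x y /(nthP x)[i i_lt <-] /(nthP x)[j j_lt <-].
rewrite (lt_sorted_ltn_nth x s_lt) // -!(nth_map x (f x)) //.
by rewrite (lt_sorted_ltn_nth (f x) fs_lt) ?inE ?size_map.
Qed.

Lemma eq_map_of_sort_acode (f : T -> T') s (t : seq T') : uniq t ->
  sort <=%O t = map f (sort <=%O s) -> acode t = acode s -> t = map f s.
Proof.
move=> t_uniq sort_t acode_t.
have fsort_lt : sorted <%O (map f (sort <=%O s)).
  by rewrite -sort_t sort_lt_sorted.
have sort_lt : sorted <%O (sort <=%O s).
  rewrite sort_lt_sorted -(sort_uniq <=%O).
  exact: map_uniq (lt_sorted_uniq fsort_lt).
have f_homo : {in s &, {homo f : x y / x < y}}.
  move=> x y s_x s_y; apply: (lt_sorted_map_homo_in _ _ sort_lt fsort_lt);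
  by rewrite mem_sort.
apply: acode_perm_inj.
  by rewrite -(perm_sort <=%O) sort_t perm_map // perm_sort.
by rewrite acode_map_mono //; apply/leW_mono_in/le_mono_in.
Qed.

End MonotoneMaps.

Lemma map_acode_entry_iota (w : seq int) m :
  map (acode_entry w) (iota m (size w - m)) = acode (drop m w).
Proof.
move Ed: (size w - m)%N => d; elim: d m Ed => [|d IHd] m Ed /=.
  by rewrite drop_oversize // -subn_eq0 Ed.
have m_lt : (m < size w)%N by rewrite -subn_gt0 Ed.
by rewrite (drop_nth 0%R m_lt) /= IHd // subnS Ed.
Qed.

Lemma tcode_acode k (w : seq int) : tcode k w = acode (drop k w).
Proof. exact: map_acode_entry_iota. Qed.

Lemma inWD_uniq n w : inWD n w -> uniq w.
Proof.
case/and3P=> _ abs_w _; apply: (map_uniq (f := absz)).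
by rewrite (perm_uniq abs_w) iota_uniq.
Qed.

Lemma vperm_eq_sact k s (w wb : seq int) : size wb = size w ->
  vperm k wb = sact s (vperm k w) ->
  take k wb = sact s (take k w) /\
  sort <=%O (drop k wb) = sact s (sort <=%O (drop k w)).
Proof.
move=> eq_size /eqP; rewrite /vperm /sact map_cat eqseq_cat.
  by case/andP=> /eqP-> /eqP->.
by rewrite size_map !size_take eq_size.
Qed.

Theorem lemma12 (n k : nat) (w wb : seq int) (s : sref) :
  (2 <= n)%N -> (1 <= k)%N ->
  inWD n w -> inWD n wb ->
  incr_upto k w -> incr_upto k wb ->
  tcode k w = tcode k wb ->
  lenD w = (lenD wb).+1 ->
  valid_sref n s ->
  vperm k wb = sact s (vperm k w) ->
  wb = sact s w.
Proof.
move=> _ _ w_D wb_D _ _ eq_tcode _ _.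
have [/eqP size_w _ _] := and3P w_D; have [/eqP size_wb _ _] := and3P wb_D.
case/vperm_eq_sact=> [|eq_take eq_sort]; first by rewrite size_w size_wb.
have eq_drop : drop k wb = sact s (drop k w).
  have /inWD_uniq/(drop_uniq k) drop_wb_uniq := wb_D.
  apply: (eq_map_of_sort_acode _ _ _ drop_wb_uniq eq_sort).
  by rewrite -!tcode_acode eq_tcode.
by rewrite -(cat_take_drop k wb) eq_take eq_drop -map_cat cat_take_drop.
Qed.
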